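(* Let $m\ge3$, $C$ a set of $m$ candidates, $T$ the set of all $m!$ strict rankings of $C$, $w=(w_1,\dots,w_m)$ with $1=w_1\ge\cdots\ge w_m=0$, $\bar w=(w_1+\cdots+w_m)/m$, and $\sigma_t(\alpha)=w_i$ where $i$ is the position of $\alpha$ in $t\in T$. Let $(N_t)_{t\in T}$ be nonnegative integers with $\sum_tN_t=n$ and $|\alpha|=\sum_tN_t\sigma_t(\alpha)$. Suppose $|a|>|\alpha|$ for all $\alpha\ne a$, and $b\ne a$ satisfies $|b|\ge|\alpha|$ for all $\alpha\ne a$. Let $T_b$ be the set of types ranking $b$ first, $T_i$ ($1\le i\le m-1$) the set of types ranking $b$ in position $i$ and $a$ in position $i+1$, and $T_{ba}=\bigcup_{i=1}^{m-1}T_i$. Suppose nonnegative reals $z_1,\dots,z_{m-1}$ satisfy $$\sum_{i=1}^{m-1}z_i(1-w_i+w_{i+1})\ge|a|-|b|,\qquad \sum_{i=1}^{m-1}z_i(1-w_i)\ge n\bar w-|b|.$$ Then there exist reals $x_t\ge0$ ($t\in T_{ba}$) and $y_t\ge0$ ($t\in T_b$) with $\sum_{t\in T_i}x_t=z_i$ for each $i=1,\dots,m-1$, $\sum_{t\in T_b}y_t=\sum_{t\in T_{ba}}x_t$, and $$\sum_{t\in T_b}y_t(1-\sigma_t(\alpha))-\sum_{t\in T_{ba}}x_t(\sigma_t(b)-\sigma_t(\alpha))\ge|\alpha|-|b|\quad\text{for all }\alpha\ne b.$$ *)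

From HB Require Import structures.
From mathcomp Require Import all_boot all_order all_fingroup all_algebra.
From mathcomp Require Import reals.
Set Implicit Arguments. Unset Strict Implicit. Unset Printing Implicit Defensive.
Import Order.TTheory GRing.Theory Num.Theory.
Local Open Scope ring_scope.

(* A type (strict ranking) t : {perm 'I_m} maps a
   candidate to its position, positions being 0-based (position 0 = first).
   Weights w : nat -> R, w k = weight of 0-based position k (paper's w_{k+1}). *)

Definition sigma (R : pzRingType) (m : nat) (w : nat -> R) (t : {perm 'I_m})
  (al : 'I_m) : R := w (t al).

Definition score (R : pzRingType) (m : nat) (w : nat -> R)
  (N : {perm 'I_m} -> nat) (al : 'I_m) : R :=
  \sum_(t : {perm 'I_m}) (N t)%:R * sigma w t al.

Definition wbar (R : fieldType) (m : nat) (w : nat -> R) : R :=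
  (\sum_(i < m) w i) / m%:R.

From HB Require Import structures.
From mathcomp Require Import all_boot all_order all_fingroup all_algebra.
From mathcomp Require Import reals.
From mathcomp Require Import ring lra zify.
Import Order.TTheory GRing.Theory Num.Theory.
Local Open Scope ring_scope.
Set Implicit Arguments. Unset Strict Implicit. Unset Printing Implicit Defensive.

(* For a feasible plan (x, y), write [gain x y al] for the left-hand side of the
   last inequality.  Since every ranking carries the same multiset of weights, the
   gains over al <> b always sum to m * sum_i z_i (1 - w_i), which by the last
   hypothesis dominates the sum of the targets |al| - |b|; these targets are <= 0
   off a and at most sum_i z_i (1 - w_i + w_(i+1)) at a.  Feasible plans form a
   convex cone, so it suffices to realise a few extremal gain vectors.  They come
   from plans spreading z_i evenly over rankings with b, a at positions i, i + 1
   and sum_i z_i evenly over rankings with b first and either a last, or a second,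
   or a last and a chosen g second; by symmetry under transpositions of the other
   candidates, such a gain vector is determined by its values at a and g. *)

Lemma exists_perm2 (T : finType) (u v p q : T) :
  u != v -> p != q -> exists s : {perm T}, s u = p /\ s v = q.
Proof.
move=> uv pq; pose s1 := tperm u p.
have s1v : s1 v != p by rewrite -[p in _ != p](tpermL u p) (inj_eq perm_inj) eq_sym.
by exists (s1 * tperm (s1 v) q)%g; rewrite !permM !tpermL tpermD // eq_sym.
Qed.

Lemma exists_perm3 (T : finType) (u v g p q r : T) :
  u != v -> g != u -> g != v -> p != q -> r != p -> r != q ->
  exists s : {perm T}, [/\ s u = p, s v = q & s g = r].
Proof.
move=> uv gu gv pq rp rq; have [s [su sv]] := exists_perm2 uv pq.
have sgp : s g != p by rewrite -su (inj_eq perm_inj).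
have sgq : s g != q by rewrite -sv (inj_eq perm_inj).
by exists (s * tperm (s g) r)%g; rewrite !permM su sv tpermL !tpermD // eq_sym.
Qed.

Lemma sum_const_notin (T : finType) (V : nmodType) (f : T -> V) (s : seq T) c :
  uniq s -> (forall x, x \notin s -> f x = c) ->
  \sum_x f x = \sum_(x <- s) f x + c *+ (#|T| - size s).
Proof.
move=> us fc; rewrite (bigID (mem s)) /= big_uniq //; congr (_ + _).
rewrite -(cardC (mem s)) (card_uniqP us) addKn -sumr_const.
by apply: eq_big => [x|x]; rewrite ?inE // => /fc.
Qed.

Definition unif (T : finType) (R : numFieldType) (P : pred T) (c : R) (t : T) : R :=
  if P t then c / #|P|%:R else 0.

Lemma unif_ge0 (T : finType) (R : numFieldType) (P : pred T) (c : R) t :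
  0 <= c -> 0 <= unif P c t.
Proof. by move=> c0; rewrite /unif; case: ifP => // _; rewrite divr_ge0. Qed.

Lemma sum_unif (T : finType) (R : numFieldType) (P Q : pred T) (c : R) :
  (exists t, P t) -> (forall t, P t -> Q t) -> \sum_(t | Q t) unif P c t = c.
Proof.
move=> [t0 Pt0] PQ; rewrite -big_mkcondr /=.
rewrite (eq_bigl (fun t => t \in P)) => [|t]; last first.
  by rewrite -topredE /=; case: (boolP (P t)) => [/PQ->|]; rewrite ?andbF.
have P0 : (0 < #|P|)%N by apply/card_gt0P; exists t0.
by rewrite sumr_const -[_ *+ #|P|]mulr_natr divfK // pnatr_eq0 -lt0n.
Qed.

Lemma unifMr (T : finType) (R : numFieldType) (P : pred T) (c d e : R) t :
  (P t -> e = d) -> unif P c t * e = unif P (c * d) t.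
Proof. by rewrite /unif; case: (P t) => [->|_] //; rewrite ?mul0r // mulrAC. Qed.

Section Manipulation.
Variables (R : realType) (m : nat) (w : nat -> R) (a b : 'I_m) (z : nat -> R).

Local Notation ranking := {perm 'I_m}.
Definition b_first (t : ranking) : bool := nat_of_ord (t b) == 0%N.
Definition b_over_a (t : ranking) : bool := nat_of_ord (t a) == (t b).+1.
Definition b_over_a_at (i : nat) (t : ranking) : bool :=
  (nat_of_ord (t b) == i) && (nat_of_ord (t a) == i.+1).

Definition gain (x y : ranking -> R) (al : 'I_m) : R :=
  \sum_(t : ranking | b_first t) y t * (1 - sigma w t al)
  - \sum_(t : ranking | b_over_a t) x t * (sigma w t b - sigma w t al).

Definition feasible (k : R) (x y : ranking -> R) : Prop :=
  [/\ forall t : ranking, nat_of_ord (t a) = (t b).+1 -> 0 <= x t,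
      forall t : ranking, nat_of_ord (t b) = 0%N -> 0 <= y t,
      forall i, (i < m.-1)%N -> \sum_(t : ranking | b_over_a_at i t) x t = k * z i &
      \sum_(t : ranking | b_first t) y t = \sum_(t : ranking | b_over_a t) x t].

Definition achievable (k : R) (c : 'I_m -> R) : Prop :=
  exists x y, feasible k x y /\ forall al, al != b -> c al <= gain x y al.

Lemma gainD x1 y1 x2 y2 al :
  gain (fun t => x1 t + x2 t) (fun t => y1 t + y2 t) al = gain x1 y1 al + gain x2 y2 al.
Proof.
rewrite /gain; under eq_bigr do rewrite mulrDl.
under [X in _ - X]eq_bigr do rewrite mulrDl.
by rewrite !big_split /= opprD addrACA.
Qed.

Lemma gainZ r x y al : gain (fun t => r * x t) (fun t => r * y t) al = r * gain x y al.
Proof. by rewrite /gain mulrBr !mulr_sumr; congr (_ - _); apply: eq_bigr => t _; rewrite mulrA. Qed.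

Lemma feasibleD k1 k2 x1 y1 x2 y2 : feasible k1 x1 y1 -> feasible k2 x2 y2 ->
  feasible (k1 + k2) (fun t => x1 t + x2 t) (fun t => y1 t + y2 t).
Proof.
move=> [x1_ge0 y1_ge0 x1_row y1_bal] [x2_ge0 y2_ge0 x2_row y2_bal]; split.
- by move=> t tba; rewrite addr_ge0 ?x1_ge0 ?x2_ge0.
- by move=> t tb; rewrite addr_ge0 ?y1_ge0 ?y2_ge0.
- by move=> i lti; rewrite big_split /= x1_row // x2_row // mulrDl.
- by rewrite !big_split /= y1_bal y2_bal.
Qed.

Lemma feasibleZ r k x y : 0 <= r -> feasible k x y ->
  feasible (r * k) (fun t => r * x t) (fun t => r * y t).
Proof.
move=> r_ge0 [x_ge0 y_ge0 x_row y_bal]; split.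
- by move=> t tba; rewrite mulr_ge0 ?x_ge0.
- by move=> t tb; rewrite mulr_ge0 ?y_ge0.
- by move=> i lti; rewrite -mulr_sumr x_row // mulrA.
- by rewrite -!mulr_sumr y_bal.
Qed.

Lemma achievable_le k c c' :
  (forall al, al != b -> c' al <= c al) -> achievable k c -> achievable k c'.
Proof.
move=> le_c [x [y [fxy gxy]]]; exists x, y; split => // al alb.
exact: le_trans (le_c _ alb) (gxy _ alb).
Qed.

Lemma achievableD k1 k2 c1 c2 : achievable k1 c1 -> achievable k2 c2 ->
  achievable (k1 + k2) (fun al => c1 al + c2 al).
Proof.
move=> [x1 [y1 [f1 g1]]] [x2 [y2 [f2 g2]]].
exists (fun t => x1 t + x2 t), (fun t => y1 t + y2 t); split; first exact: feasibleD.
by move=> al alb; rewrite gainD lerD ?g1 ?g2.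
Qed.

Lemma achievableZ r k c : 0 <= r -> achievable k c -> achievable (r * k) (fun al => r * c al).
Proof.
move=> r_ge0 [x [y [fxy gxy]]]; exists (fun t => r * x t), (fun t => r * y t).
by split; [exact: feasibleZ | move=> al alb; rewrite gainZ ler_wpM2l ?gxy].
Qed.

Lemma achievable_mix th c1 c2 c : 0 <= th <= 1 ->
  achievable 1 c1 -> achievable 1 c2 ->
  (forall al, al != b -> c al <= th * c1 al + (1 - th) * c2 al) -> achievable 1 c.
Proof.
move=> /andP[th_ge0 th_le1] ach1 ach2 le_c; apply: achievable_le le_c _.
have th'_ge0 : 0 <= 1 - th by rewrite subr_ge0.
have := achievableD (achievableZ th_ge0 ach1) (achievableZ th'_ge0 ach2).
by rewrite !mulr1 addrC subrK.
Qed.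

Lemma achievable_sum (I : eqType) (s : seq I) (P : pred I) (mu : I -> R) (c : I -> 'I_m -> R) :
  (forall j, P j -> 0 <= mu j) -> (forall j, P j -> achievable 1 (c j)) ->
  achievable (\sum_(j <- s | P j) mu j) (fun al => \sum_(j <- s | P j) mu j * c j al).
Proof.
move=> mu_ge0 ach; elim: s => [|j s IHs].
  rewrite big_nil; exists (fun=> 0), (fun=> 0); split.
    by split=> // [i _|]; rewrite ?big1 ?mul0r.
  by move=> al _; rewrite big_nil /gain !big1 ?subrr // => t _; rewrite mul0r.
rewrite big_cons; case: ifP => Pj; last first.
  by apply: achievable_le IHs => al _; rewrite big_cons Pj.
have := achievableD (achievableZ (mu_ge0 _ Pj) (ach _ Pj)) IHs.
by rewrite mulr1; apply: achievable_le => al _; rewrite big_cons Pj.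
Qed.

Hypothesis m_ge3 : (3 <= m)%N.
Hypothesis w0 : w 0%N = 1.
Hypothesis w_last : w m.-1 = 0.
Hypothesis w_decr : forall k, (k.+1 < m)%N -> w k.+1 <= w k.
Hypothesis ba : b != a.
Hypothesis z_ge0 : forall i, (i < m.-1)%N -> 0 <= z i.

Lemma w_nonincr j k : (j <= k)%N -> (k < m)%N -> w k <= w j.
Proof.
elim: k => [|k IHk]; first by rewrite leqn0 => /eqP->.
rewrite leq_eqVlt ltnS => /orP[/eqP-> //|le_jk lt_km].
exact: le_trans (w_decr lt_km) (IHk le_jk (ltnW lt_km)).
Qed.

Lemma w_le1 k : (k < m)%N -> w k <= 1.
Proof. by rewrite -w0; apply: w_nonincr. Qed.

Lemma big_b_over_a (F : ranking -> R) :
  \sum_(t : ranking | b_over_a t) F t =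
  \sum_(i < m.-1) \sum_(t : ranking | b_over_a_at i t) F t.
Proof.
under [RHS]eq_bigr do rewrite big_mkcond.
rewrite exchange_big big_mkcond /=; apply: eq_bigr => t _.
rewrite /b_over_a_at /b_over_a; case: eqP => [tba|tba]; last first.
  rewrite big1 // => i _; case: andP => // [[/eqP tbi /eqP tai]].
  by case: tba; rewrite tai tbi.
have ltbm : (t b < m.-1)%N by have := ltn_ord (t a); rewrite tba; lia.
rewrite (bigD1 (Ordinal ltbm)) //= eqxx tba eqxx big1 ?addr0 // => i neq_i.
by case: eqP => //= tbi; move: neq_i; rewrite -(inj_eq val_inj) /= -tbi eqxx.
Qed.

Definition total_gain : R := m%:R * \sum_(i < m.-1) z i * (1 - w i).

Lemma gain_total k x y : feasible k x y ->
  \sum_(al | al != b) gain x y al = k * total_gain.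
Proof.
move=> [_ _ x_row y_bal]; pose W := \sum_(j < m) w j.
have sum_rank (t : ranking) : \sum_al w (t al) = W.
  by rewrite [RHS](reindex_inj (@perm_inj _ t)).
have sum_off_b (f : 'I_m -> R) : \sum_(al | al != b) f al = \sum_al f al - f b.
  by rewrite [\sum_al f al](bigD1 b) //= addrC addrK.
have y_term (t : ranking) : b_first t ->
    \sum_(al | al != b) y t * (1 - sigma w t al) = y t * (m%:R - W).
  move=> /eqP tb; rewrite -mulr_sumr sum_off_b sumrB sum_rank sumr_const card_ord.
  by rewrite /sigma tb w0 subrr subr0.
have x_term (t : ranking) :
    \sum_(al | al != b) x t * (sigma w t b - sigma w t al) = x t * (m%:R * w (t b) - W).
  rewrite -mulr_sumr sum_off_b sumrB sum_rank sumr_const card_ord /sigma subrr subr0.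
  by rewrite mulr_natl.
have x_row_term (i : 'I_m.-1) :
    \sum_(t : ranking | b_over_a_at i t) x t * (m%:R * w (t b) - W) =
    k * z i * (m%:R * w i - W).
  by rewrite -x_row // mulr_suml; apply: eq_bigr => t /andP[/eqP tb _]; rewrite tb.
rewrite /gain sumrB exchange_big [X in _ - X]exchange_big /=.
rewrite (eq_bigr _ y_term) (eq_bigr _ (fun t _ => x_term t)) -mulr_suml y_bal.
rewrite !big_b_over_a (eq_bigr _ (fun i _ => x_row_term i)).
rewrite (eq_bigr (fun i : 'I_m.-1 => k * z i)) => [|i _]; last exact: x_row.
rewrite /total_gain mulr_suml !mulr_sumr -sumrB; apply: eq_bigr => i _; ring.
Qed.

Definition admissible (P : pred ranking) (Q : nat -> pred ranking) : Prop :=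
  [/\ exists t, P t, forall t, P t -> b_first t,
      forall i, (i < m.-1)%N -> exists t, Q i t & forall i t, Q i t -> b_over_a_at i t].

Definition plan_y (P : pred ranking) : ranking -> R := unif P (\sum_(i < m.-1) z i).

Definition plan_x (Q : nat -> pred ranking) (t : ranking) : R := unif (Q (t b)) (z (t b)) t.

Definition gain_at_pos (p : nat) (q : nat -> nat) : R :=
  \sum_(i < m.-1) z i * (1 - w p - w i + w (q i)).

Section Plan.
Variables (P : pred ranking) (Q : nat -> pred ranking).
Hypothesis PQ : admissible P Q.

Lemma plan_x_at i t : b_over_a_at i t -> plan_x Q t = unif (Q i) (z i) t.
Proof. by move=> /andP[/eqP tb _]; rewrite /plan_x tb. Qed.

Lemma plan_feasible : feasible 1 (plan_x Q) (plan_y P).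
Proof.
have [Pex Pb Qex Qba] := PQ.
have x_row i : (i < m.-1)%N -> \sum_(t : ranking | b_over_a_at i t) plan_x Q t = z i.
  move=> lti; rewrite (eq_bigr _ (fun t => @plan_x_at i t)).
  exact: sum_unif (Qex i lti) (Qba i).
split.
- move=> t tba; apply: unif_ge0; apply: z_ge0.
  by have := ltn_ord (t a); rewrite tba; lia.
- by move=> t _; apply: unif_ge0; apply: sumr_ge0 => i _; apply: z_ge0.
- by move=> i lti; rewrite mul1r x_row.
- rewrite (sum_unif _ Pex Pb) big_b_over_a.
  by apply: eq_bigr => i _; rewrite x_row.
Qed.

Lemma achievable_plan : achievable 1 (gain (plan_x Q) (plan_y P)).
Proof. by exists (plan_x Q), (plan_y P); split; [exact: plan_feasible|]. Qed.

Lemma gain_plan_at_pos (g : 'I_m) (p : nat) (q : nat -> nat) :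
  (forall t, P t -> nat_of_ord (t g) = p) -> (forall i t, Q i t -> nat_of_ord (t g) = q i) ->
  gain (plan_x Q) (plan_y P) g = gain_at_pos p q.
Proof.
have [Pex Pb Qex Qba] := PQ; move=> Pg Qg.
have y_part : \sum_(t : ranking | b_first t) plan_y P t * (1 - sigma w t g) =
    (\sum_(i < m.-1) z i) * (1 - w p).
  transitivity (\sum_(t : ranking | b_first t) unif P ((\sum_(i < m.-1) z i) * (1 - w p)) t).
    by apply: eq_bigr => t _; apply: unifMr => /Pg; rewrite /sigma => ->.
  exact: sum_unif.
have x_part : \sum_(t : ranking | b_over_a t) plan_x Q t * (sigma w t b - sigma w t g) =
    \sum_(i < m.-1) z i * (w i - w (q i)).
  rewrite big_b_over_a; apply: eq_bigr => i _.
  transitivity (\sum_(t : ranking | b_over_a_at i t) unif (Q i) (z i * (w i - w (q i))) t).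
    apply: eq_bigr => t /[dup] tQi /andP[/eqP tb _]; rewrite (plan_x_at tQi).
    by apply: unifMr => /Qg; rewrite /sigma tb => ->.
  exact: sum_unif (Qex i (ltn_ord i)) (Qba i).
rewrite /gain y_part x_part /gain_at_pos mulr_suml -sumrB.
by apply: eq_bigr => i _; ring.
Qed.

End Plan.

Lemma gain_perm x y (s : ranking) al : s a = a -> s b = b ->
  (forall t, x (s * t)%g = x t) -> (forall t, y (s * t)%g = y t) ->
  gain x y (s al) = gain x y al.
Proof.
move=> sa sb xs ys.
have reindex_s (P : pred ranking) (F : ranking -> R) : (forall t, P (s * t)%g = P t) ->
    \sum_(t | P t) F t = \sum_(t | P t) F (s * t)%g.
  by move=> Ps; rewrite (reindex_inj (mulgI s)); apply: eq_bigl.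
rewrite /gain [in RHS](reindex_s b_first) => [|t]; last by rewrite /b_first permM sb.
rewrite [in RHS](reindex_s b_over_a) => [|t]; last by rewrite /b_over_a !permM sa sb.
by congr (_ - _); apply: eq_bigr => t _; rewrite ?xs ?ys /sigma !permM ?sb.
Qed.

Lemma plan_y_perm P (s t : ranking) :
  (forall t, P (s * t)%g = P t) -> plan_y P (s * t)%g = plan_y P t.
Proof. by move=> Ps; rewrite /plan_y /unif Ps. Qed.

Lemma plan_x_perm Q (s t : ranking) : s b = b ->
  (forall i t, Q i (s * t)%g = Q i t) -> plan_x Q (s * t)%g = plan_x Q t.
Proof. by move=> sb Qs; rewrite /plan_x /unif permM sb Qs. Qed.

Lemma gain_plan_others P Q (s : seq 'I_m) be :
  admissible P Q -> uniq (b :: s) -> a \in s ->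
  (forall t t' : ranking, {in b :: s, t =1 t'} -> P t = P t' /\ forall i, Q i t = Q i t') ->
  be \notin b :: s ->
  (m - (size s).+1)%:R * gain (plan_x Q) (plan_y P) be =
  total_gain - \sum_(al <- s) gain (plan_x Q) (plan_y P) al.
Proof.
move=> PQ uniq_bs a_s PQ_local be_bs; set f := gain _ _.
have f_const al : al \notin b :: s -> f al = f be.
  move=> al_bs.
  have fix_bs c : c \in b :: s -> tperm al be c = c.
    by move=> cs; rewrite tpermD //; apply/eqP => eq_c; move: cs;
      rewrite -eq_c ?(negPf al_bs) ?(negPf be_bs).
  have local t : P (tperm al be * t)%g = P t /\ forall i, Q i (tperm al be * t)%g = Q i t.
    by apply: PQ_local => c cs; rewrite permM fix_bs.
  rewrite /f -{1}(tpermR al be) gain_perm ?fix_bs ?inE ?eqxx ?a_s ?orbT //.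
  - by move=> t; apply: plan_x_perm => [|i t']; [rewrite fix_bs ?inE ?eqxx | case: (local t')].
  - by move=> t; apply: plan_y_perm => t'; case: (local t').
(* f is constant off b :: s by symmetry, so its value there is fixed by gain_total. *)
have := sum_const_notin uniq_bs f_const.
rewrite card_ord (bigD1 b) //= (gain_total (plan_feasible PQ)) big_cons mul1r.
rewrite mulr_natl; set rest := f be *+ _; lra.
Qed.

Lemma exists_ranking2 (p q : nat) : (p < m)%N -> (q < m)%N -> p != q ->
  exists t : ranking, nat_of_ord (t b) = p /\ nat_of_ord (t a) = q.
Proof.
move=> ltp ltq pq; have [t [tb ta]] := @exists_perm2 _ _ _ (Ordinal ltp) (Ordinal ltq) ba pq.
by exists t; rewrite tb ta.
Qed.

Lemma exists_ranking3 (g : 'I_m) (p q r : nat) : g != a -> g != b ->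
  (p < m)%N -> (q < m)%N -> (r < m)%N -> p != q -> r != p -> r != q ->
  exists t : ranking, [/\ nat_of_ord (t b) = p, nat_of_ord (t a) = q & nat_of_ord (t g) = r].
Proof.
move=> ga gb ltp ltq ltr pq rp rq.
have [t [tb ta tg]] :=
  @exists_perm3 _ _ _ _ (Ordinal ltp) (Ordinal ltq) (Ordinal ltr) ba gb ga pq rp rq.
by exists t; rewrite tb ta tg.
Qed.

Definition b_first_a_at (p : nat) (t : ranking) : bool :=
  b_first t && (nat_of_ord (t a) == p).

(* The lowest position left free by b and a when they occupy positions i and i + 1. *)
Definition low (i : nat) : nat := if (i.+2 < m)%N then m.-1 else (m - 3)%N.

Definition g_second (g : 'I_m) (t : ranking) : bool :=
  b_first_a_at m.-1 t && (nat_of_ord (t g) == 1%N).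
Definition g_low (g : 'I_m) (i : nat) (t : ranking) : bool :=
  b_over_a_at i t && (nat_of_ord (t g) == low i).

Lemma admissible_a_at (p : nat) : (0 < p < m)%N -> admissible (b_first_a_at p) b_over_a_at.
Proof.
move=> /andP[p_gt0 ltpm]; split=> //.
- have [t [tb ta]] := @exists_ranking2 0 p ltac:(lia) ltpm ltac:(lia).
  by exists t; rewrite /b_first_a_at /b_first tb ta !eqxx.
- by move=> t /andP[].
- move=> i lti; have [t [tb ta]] := @exists_ranking2 i i.+1 ltac:(lia) ltac:(lia) ltac:(lia).
  by exists t; rewrite /b_over_a_at tb ta !eqxx.
Qed.

Lemma admissible_g (g : 'I_m) : g != a -> g != b -> admissible (g_second g) (g_low g).
Proof.
move=> ga gb; split.
- have [t [tb ta tg]] := @exists_ranking3 g 0 m.-1 1 ga gb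
    ltac:(lia) ltac:(lia) ltac:(lia) ltac:(lia) ltac:(lia) ltac:(lia).
  by exists t; rewrite /g_second /b_first_a_at /b_first tb ta tg !eqxx.
- by move=> t /andP[/andP[]].
- move=> i lti; rewrite /g_low /low; case: ifP => lowi.
    have [t [tb ta tg]] := @exists_ranking3 g i i.+1 m.-1 ga gb
      ltac:(lia) ltac:(lia) ltac:(lia) ltac:(lia) ltac:(lia) ltac:(lia).
    by exists t; rewrite /b_over_a_at tb ta tg !eqxx.
  have [t [tb ta tg]] := @exists_ranking3 g i i.+1 (m - 3) ga gb
    ltac:(lia) ltac:(lia) ltac:(lia) ltac:(lia) ltac:(lia) ltac:(lia).
  by exists t; rewrite /b_over_a_at tb ta tg !eqxx.
- by move=> i t /andP[].
Qed.

Definition top_gain : R := \sum_(i < m.-1) z i * (1 - w i + w i.+1).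

Lemma gain_at_pos_last : gain_at_pos m.-1 S = top_gain.
Proof. by apply: eq_bigr => i _; rewrite w_last subr0. Qed.

Lemma achievable_a_at (p : nat) : (0 < p < m)%N ->
  achievable 1 (fun al => if al == a then gain_at_pos p S
                          else (total_gain - gain_at_pos p S) / (m - 2)%:R).
Proof.
move=> ltp; have Pp := admissible_a_at ltp.
apply: achievable_le (achievable_plan Pp) => al alb.
have gain_a : gain (plan_x b_over_a_at) (plan_y (b_first_a_at p)) a = gain_at_pos p S.
  by apply: gain_plan_at_pos => // [t /andP[_ /eqP]|i t /andP[_ /eqP]].
case: eqP => [-> | /eqP ala]; first by rewrite gain_a.
have uniq_ba : uniq [:: b; a] by rewrite /= inE ba.
have al_ba : al \notin [:: b; a] by rewrite !inE negb_or alb ala.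
have := @gain_plan_others _ _ [:: a] al Pp uniq_ba (mem_head _ _) _ al_ba.
rewrite big_seq1 gain_a => <-; last first.
  by move=> t t' tt'; rewrite /b_first_a_at /b_first /b_over_a_at !tt' ?inE ?eqxx ?orbT.
by rewrite mulrC mulKf // pnatr_eq0; lia.
Qed.

Lemma four_le_m (g al : 'I_m) : g != a -> g != b -> al != a -> al != b -> al != g ->
  (4 <= m)%N.
Proof.
move=> ga gb ala alb alg.
have uniq_bagal : uniq [:: b; a; g; al].
  rewrite /= !inE !negb_or ba (eq_sym b g) gb (eq_sym b al) alb.
  by rewrite (eq_sym a g) ga (eq_sym a al) ala (eq_sym g al) alg.
by have := max_card (mem [:: b; a; g; al]); rewrite card_ord (card_uniqP uniq_bagal).
Qed.

Lemma achievable_g_second (g : 'I_m) : g != a -> g != b ->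
  achievable 1 (fun al => if al == a then top_gain
                          else if al == g then gain_at_pos 1 low
                          else (total_gain - top_gain - gain_at_pos 1 low) / (m - 3)%:R).
Proof.
move=> ga gb; have Pg := admissible_g ga gb.
apply: achievable_le (achievable_plan Pg) => al alb.
have gain_a : gain (plan_x (g_low g)) (plan_y (g_second g)) a = top_gain.
  rewrite -gain_at_pos_last.
  by apply: gain_plan_at_pos => // [t /andP[/andP[_ /eqP]]|i t /andP[/andP[_ /eqP]]].
have gain_g : gain (plan_x (g_low g)) (plan_y (g_second g)) g = gain_at_pos 1 low.
  by apply: gain_plan_at_pos => // [t /andP[_ /eqP]|i t /andP[_ /eqP]].
case: eqP => [-> | /eqP ala]; first by rewrite gain_a.
case: eqP => [-> | /eqP alg]; first by rewrite gain_g.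
have uniq_bag : uniq [:: b; a; g].
  by rewrite /= !inE !negb_or ba (eq_sym b g) gb (eq_sym a g) ga.
have al_bag : al \notin [:: b; a; g] by rewrite !inE !negb_or alb ala alg.
have m_ge4 := four_le_m ga gb ala alb alg.
have := @gain_plan_others _ _ [:: a; g] al Pg uniq_bag (mem_head _ _) _ al_bag.
rewrite !big_cons big_nil addr0 gain_a gain_g opprD addrA => <-; last first.
  move=> t t' tt'; rewrite /g_second /g_low /b_first_a_at /b_first /b_over_a_at.
  by rewrite !tt' ?inE ?eqxx ?orbT.
by rewrite mulrC mulKf // pnatr_eq0; lia.
Qed.

Lemma sum_z_slack_ge0 : 0 <= \sum_(i < m.-1) z i * (1 - w i).
Proof.
apply: sumr_ge0 => i _; rewrite mulr_ge0 ?z_ge0 // subr_ge0 w_le1 //.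
by have := ltn_ord i; lia.
Qed.

Lemma gain_at_pos_second_le : gain_at_pos 1 S <= total_gain.
Proof.
apply: (@le_trans _ _ (\sum_(i < m.-1) z i * (1 - w i))); last first.
  by rewrite /total_gain ler_peMl ?sum_z_slack_ge0 // ler1n; lia.
apply: ler_sum => i _; have lti := ltn_ord i; rewrite ler_wpM2l ?z_ge0 //.
have : w i.+1 <= w 1 by apply: w_nonincr; lia.
lra.
Qed.

Lemma low_slack i : (i < m.-1)%N ->
  (1 - w i + w i.+1) + (1 - w 1 - w i + w (low i)) <= 3%:R * (1 - w i).
Proof.
move=> lti; have w_i1 : w i <= 1 by apply: w_le1; lia.
rewrite /low; case: ifP => lowi.
  have : w i.+1 <= w 1 by apply: w_nonincr; lia.
  rewrite w_last; lra.
have -> : i.+1 = m.-1 by lia.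
have : w i <= w 1 by apply: w_nonincr; lia.
have : w (m - 3)%N <= 1 by apply: w_le1; lia.
rewrite w_last; lra.
Qed.

Lemma gain_at_pos_low_le : gain_at_pos 1 low <= total_gain - top_gain.
Proof.
rewrite lerBrDr /top_gain /gain_at_pos -big_split /= /total_gain mulr_sumr.
apply: ler_sum => i _; rewrite -mulrDr mulrCA ler_wpM2l ?z_ge0 //.
rewrite addrC; apply: le_trans (low_slack (ltn_ord i)) _.
rewrite ler_wpM2r ?ler_nat // subr_ge0 w_le1 //.
by have := ltn_ord i; lia.
Qed.

Lemma achievable_a_total : total_gain < top_gain ->
  achievable 1 (fun al => if al == a then total_gain else 0).
Proof.
move=> lt_tt; have A1_le := gain_at_pos_second_le.
have ach_last := achievable_a_at (p := m.-1) ltac:(lia); rewrite gain_at_pos_last in ach_last.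
have ach_second := achievable_a_at (p := 1) ltac:(lia).
set A1 := gain_at_pos 1 S in A1_le ach_second *.
have top_A1 : 0 < top_gain - A1 by lra.
have top_A1_neq0 : top_gain - A1 != 0 by rewrite gt_eqF.
have m2_neq0 : (m - 2)%:R != 0 :> R by rewrite pnatr_eq0; lia.
(* th makes a's gain th * top_gain + (1 - th) * A1 equal to total_gain, which
   forces the gains of the other candidates to vanish. *)
pose th := (total_gain - A1) / (top_gain - A1).
apply: (@achievable_mix th _ _ _ _ ach_last ach_second) => [|al alb /=].
  rewrite /th divr_ge0 ?subr_ge0 //=; last lra.
  by rewrite ler_pdivrMr // mul1r; lra.
by case: ifP => _; rewrite le_eqVlt /th; apply/orP; left; apply/eqP; field;
  rewrite ?m2_neq0.
Qed.

Lemma achievable_a_g (g : 'I_m) : g != a -> g != b -> total_gain < top_gain ->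
  achievable 1 (fun al => if al == a then top_gain
                          else if al == g then total_gain - top_gain else 0).
Proof.
move=> ga gb lt_tt; have V_le := gain_at_pos_low_le.
have ach_last := achievable_a_at (p := m.-1) ltac:(lia); rewrite gain_at_pos_last in ach_last.
have ach_g := achievable_g_second ga gb.
set V := gain_at_pos 1 low in V_le ach_g *; set u := total_gain - top_gain in V_le ach_last ach_g *.
have m2E : (m - 2 = (m - 3) + 1)%N by lia.
rewrite m2E natrD in ach_last.
set k := (m - 3)%:R in ach_last ach_g.
have k_ge0 : 0 <= k := ler0n _ _.
have u_lt0 : u < 0 by rewrite /u; lra.
set e := u / (k + 1).
have eE : (k + 1) * e = u by rewrite /e mulrC divfK // gt_eqF // ltr_wpDl.
have e_lt0 : e < 0 by rewrite /e ltr_pdivrMr ?mul0r // ltr_wpDl.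
have e_ge_u : u <= e by rewrite -eE mulrDl mul1r gerDr mulr_ge0_le0 // ltW.
have eV_ge0 : 0 <= e - V by lra.
(* rho makes g's gain rho * e + (1 - rho) * V equal to u, which forces the gains
   of the candidates other than a and g to vanish. *)
pose rho := (u - V) / (e - V).
have rhoE : rho * (e - V) = u - V.
  have [eV0|eV_neq0] := eqVneq (e - V) 0; last by rewrite /rho divfK.
  by rewrite eV0 mulr0; lra.
have rho_ge0 : 0 <= rho by rewrite /rho divr_ge0 // subr_ge0.
have rho_le1 : rho <= 1.
  have [eV0|eV_neq0] := eqVneq (e - V) 0; first by rewrite /rho eV0 invr0 mulr0 ler01.
  by rewrite /rho ler_pdivrMr ?mul1r ?lt0r ?eV_neq0 //; lra.
apply: (@achievable_mix rho _ _ _ _ ach_last ach_g) => [|al alb /=].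
  by rewrite rho_ge0 rho_le1.
case: ifP => [_|/negbT ala]; first by rewrite -mulrDl addrC subrK mul1r.
case: ifP => [_|/negbT alg].
  have -> : rho * e + (1 - rho) * V = u by rewrite -[u](subrK V) -rhoE; ring.
  exact: lexx.
have m_ge4 := four_le_m ga gb ala alb alg.
have k_ge1 : 1 <= k by rewrite /k ler1n subn_gt0.
have ke_le : k * e <= e by rewrite -[leRHS]mul1r ler_wnM2r // ltW.
have eV_gt0 : 0 < e - V.
  by move: eE ke_le; rewrite mulrDl mul1r; set ke := k * e; lra.
suff -> : rho * e + (1 - rho) * ((u - V) / k) = 0 by [].
rewrite /rho -eE; field.
by rewrite -/k (gt_eqF eV_gt0) andbT gt_eqF // (lt_le_trans ltr01 k_ge1).
Qed.

Lemma achievable_bounded_lt (c : 'I_m -> R) : total_gain < top_gain ->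
  c a <= top_gain -> (forall al, al != b -> al != a -> c al <= 0) ->
  \sum_(al | al != b) c al <= total_gain -> achievable 1 c.
Proof.
move=> lt_tt ca_le c_le0 sum_c_le; have ab : a != b by rewrite eq_sym.
(* c is dominated by (1 - D / M) * (total_gain at a) plus, for every other g,
   (- c g / M) * (top_gain at a, total_gain - top_gain at g); the choice of M makes
   the weights sum to 1 and gives a at least min (total_gain + D) top_gain. *)
pose others := [pred al | (al != b) && (al != a)].
pose D := \sum_(al | others al) - c al.
have D_ge0 : 0 <= D by apply: sumr_ge0 => al /andP[alb ala]; rewrite oppr_ge0 c_le0.
have ca_le' : c a <= total_gain + D.
  by move: sum_c_le; rewrite (bigD1 a) //= /D sumrN; lra.
pose M := Num.max D (top_gain - total_gain).
have M_gt0 : 0 < M by rewrite /M lt_max; lra.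
have DM_le1 : D / M <= 1 by rewrite ler_pdivrMr // mul1r le_max lexx.
have mu_ge0 g : others g -> 0 <= - c g / M.
  by move=> /andP[gb ga]; rewrite divr_ge0 ?oppr_ge0 ?c_le0 // ltW.
have lam_ge0 : 0 <= 1 - D / M by rewrite subr_ge0.
have := achievableD (achievableZ lam_ge0 (achievable_a_total lt_tt))
  (achievable_sum (index_enum _) mu_ge0
     (fun g (og : others g) => achievable_a_g (andP og).2 (andP og).1 lt_tt)).
have sum_mu : \sum_(j | others j) - c j / M = D / M by rewrite /D mulr_suml.
rewrite mulr1 sum_mu subrK; apply: achievable_le => al alb /=.
case: ifP => [/eqP -> | /negbT ala].
  rewrite -mulr_suml sum_mu.
  have -> : (1 - D / M) * total_gain + D / M * top_gain =
            total_gain + D / M * (top_gain - total_gain) by ring.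
  rewrite /M; case: (leP D (top_gain - total_gain)) => [le_D|lt_D].
    by rewrite divfK ?gt_eqF //; lra.
  by rewrite divff ?gt_eqF //; lra.
rewrite mulr0 add0r (bigD1 al) /= ?alb ?ala // eqxx big1 ?addr0 => [|j /andP[_ /negPf]]; last first.
  by rewrite eq_sym => ->; rewrite mulr0.
have q_le1 : (top_gain - total_gain) / M <= 1 by rewrite ler_pdivrMr // mul1r le_max lexx orbT.
rewrite (_ : _ * _ = c al * ((top_gain - total_gain) / M)); last by ring.
have := c_le0 _ alb ala; nra.
Qed.

Lemma achievable_bounded (c : 'I_m -> R) :
  c a <= top_gain -> (forall al, al != b -> al != a -> c al <= 0) ->
  \sum_(al | al != b) c al <= total_gain -> achievable 1 c.
Proof.
move=> ca_le c_le0 sum_c_le; have [le_tt|lt_tt] := leP top_gain total_gain.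
  apply: achievable_le (achievable_a_at (p := m.-1) ltac:(lia)) => al alb.
  rewrite gain_at_pos_last; case: eqP => [-> //|/eqP ala].
  by rewrite (le_trans (c_le0 _ alb ala)) // divr_ge0 ?subr_ge0.
exact: achievable_bounded_lt.
Qed.

End Manipulation.

Lemma sum_score (R : pzRingType) (m : nat) (w : nat -> R) (N : {perm 'I_m} -> nat) :
  \sum_al score w N al = (\sum_t N t)%:R * \sum_(j < m) w j.
Proof.
rewrite /score exchange_big natr_sum mulr_suml; apply: eq_bigr => t _.
by rewrite -mulr_sumr /sigma [in RHS](reindex_inj (@perm_inj _ t)).
Qed.

Lemma sum_score_gap (R : numFieldType) (m : nat) (w : nat -> R) (N : {perm 'I_m} -> nat)
    (b : 'I_m) : (0 < m)%N ->
  \sum_(al | al != b) (score w N al - score w N b) =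
  m%:R * ((\sum_t N t)%:R * wbar m w - score w N b).
Proof.
move=> m_gt0; rewrite [LHS](_ : _ = \sum_al (score w N al - score w N b)); last first.
  by rewrite [RHS](bigD1 b) //= subrr add0r.
rewrite sumrB sum_score sumr_const card_ord /wbar mulrBr mulrCA.
by rewrite [m%:R * (_ / _)]mulrC divfK ?pnatr_eq0 -?lt0n // (mulr_natl (score w N b)).
Qed.

Theorem theorem9 (R : realType) (m : nat) (w : nat -> R)
  (N : {perm 'I_m} -> nat) (n : nat) (a b : 'I_m) (z : nat -> R) :
  (3 <= m)%N ->
  w 0%N = 1 -> w m.-1 = 0 ->
  (forall k : nat, (k.+1 < m)%N -> w k.+1 <= w k) ->
  n = (\sum_(t : {perm 'I_m}) N t)%N ->
  (forall al : 'I_m, al != a -> score w N al < score w N a) ->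
  b != a ->
  (forall al : 'I_m, al != a -> score w N al <= score w N b) ->
  (forall i : nat, (i < m.-1)%N -> 0 <= z i) ->
  \sum_(i < m.-1) z i * (1 - w i + w i.+1) >= score w N a - score w N b ->
  \sum_(i < m.-1) z i * (1 - w i) >= n%:R * wbar m w - score w N b ->
  exists x y : {perm 'I_m} -> R,
    (forall t : {perm 'I_m}, nat_of_ord (t a) = (t b).+1 -> 0 <= x t) /\
    (forall t : {perm 'I_m}, nat_of_ord (t b) = 0%N -> 0 <= y t) /\
    (forall i : nat, (i < m.-1)%N ->
       \sum_(t : {perm 'I_m} | (nat_of_ord (t b) == i) && (nat_of_ord (t a) == i.+1)) x t = z i) /\
    \sum_(t : {perm 'I_m} | nat_of_ord (t b) == 0%N) y t
      = \sum_(t : {perm 'I_m} | nat_of_ord (t a) == (t b).+1) x t /\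
    (forall al : 'I_m, al != b ->
       \sum_(t : {perm 'I_m} | nat_of_ord (t b) == 0%N) y t * (1 - sigma w t al)
       - \sum_(t : {perm 'I_m} | nat_of_ord (t a) == (t b).+1) x t * (sigma w t b - sigma w t al)
       >= score w N al - score w N b).
Proof.
move=> m_ge3 w0 w_last w_decr n_sum _ ba b_max z_ge0 a_margin b_slack.
have c_le0 al : al != b -> al != a -> score w N al - score w N b <= 0.
  by move=> _ ala; rewrite subr_le0 b_max.
have sum_gap_le : \sum_(al | al != b) (score w N al - score w N b) <= total_gain m w z.
  by rewrite sum_score_gap ?(leq_trans _ m_ge3) // -n_sum ler_wpM2l.
have [x [y [[x_ge0 y_ge0 x_row y_bal] gain_ge]]] :=
  achievable_bounded m_ge3 w0 w_last w_decr ba z_ge0 a_margin c_le0 sum_gap_le.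
exists x, y; do 2 split=> //; split=> [i lti|]; first by rewrite x_row // mul1r.
by split.
Qed.
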